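(* Let $P_S,H_{SR},H_{SD},H_{RD},\sigma_a^2,\sigma_b^2>0$, $\eta\in(0,1]$, assume $\sigma_R^2=\sigma_D^2=\sigma_a^2+\sigma_b^2$ and $H_{SR}>H_{SD}$, and let $\rho^{\mathrm{th}}=1-\frac{H_{SD}\sigma_b^2}{H_{SR}\sigma_D^2-H_{SD}\sigma_a^2}$. Fix $\rho\in(0,\rho^{\mathrm{th}})$ and set $C^{(PS)}_{SR}=\log\big(1+\frac{(1-\rho)P_SH_{SR}}{(1-\rho)\sigma_a^2+\sigma_b^2}\big)$, $b=C_{SD}=\log(1+P_SH_{SD}/\sigma_D^2)$, $a'=C^{(PS)}_{SR}-C_{SD}$, $c'=\eta\rho H_{SR}H_{RD}P_S/\sigma_D^2$. Then the problem $$\max_{\lambda\in(0,1)}\min\Big\{\lambda C^{(PS)}_{SR},\ \lambda b+(1-\lambda)\Big(b+\log\Big(1+\frac{c'\lambda}{1-\lambda}\Big)\Big)\Big\}$$ is solved by $\lambda^*=\max\{\lambda_1,\lambda_2\}$, where $$\lambda_1=\frac{-\frac{1}{a'}\mathcal W_{-1}\!\big(-\frac{a'}{c'}e^{-b-\frac{a'}{c'}}\big)-\frac1{c'}}{1-\frac{1}{a'}\mathcal W_{-1}\!\big(-\frac{a'}{c'}e^{-b-\frac{a'}{c'}}\big)-\frac1{c'}},\qquad \lambda_2=\frac{e^{\mathcal W_0(\frac{c'-1}{e})+1}-1}{e^{\mathcal W_0(\frac{c'-1}{e})+1}+c'-1}.$$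
   Context: $\log$ is the natural logarithm; $\mathcal W_0,\mathcal W_{-1}$ are the principal and lower real branches of the Lambert W function. This is the power-splitting (PS) relay protocol with mutual-information accumulation at the destination for a fixed power-splitting ratio $\rho$ (fraction of received power used for energy harvesting), with relay forwarding power $\eta\rho H_{SR}P_S\lambda/(1-\lambda)$; $\lambda$ is the broadcast time fraction. $\sigma_a^2,\sigma_b^2$ are antenna and signal-processing noise powers at the relay. *)

From Stdlib Require Import Reals ClassicalEpsilon.
Open Scope R_scope.

(* Real branches of the Lambert W function, defined as in the literature:
   W0 x  is the solution w >= -1 of w e^w = x   (x >= -1/e),
   Wm1 x is the solution w <= -1 of w e^w = x   (-1/e <= x < 0).
   Outside the domain the value is an unspecified real (Hilbert choice). *)
Definition LambertW0 (x : R) : R :=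
  epsilon (inhabits 0) (fun w => -1 <= w /\ w * exp w = x).
Definition LambertWm1 (x : R) : R :=
  epsilon (inhabits 0) (fun w => w <= -1 /\ w * exp w = x).

Definition ps_objective (CSR b c' lam : R) : R :=
  Rmin (lam * CSR)
       (lam * b + (1 - lam) * (b + ln (1 + c' * lam / (1 - lam)))).

(* Substituting u = 1 + c' λ/(1 - λ), i.e. λ = (u - 1)/(u - 1 + c'), turns the
   objective into min (C λ(u), b + c' ln u/(u - 1 + c')).  The first branch is
   increasing in u; the second is maximal at the stationary point E of
   ln u/(u - 1 + c'), given by E (ln E - 1) = c' - 1, i.e. ln E - 1 = W0((c'-1)/e),
   and decreasing beyond it.  The branches cross at the u1 > 1 solving
   ln u1 = (a'/c')(u1 - 1) - b, i.e. -(a'/c') u1 = W_{-1}(...), and the second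
   branch is the smaller one beyond u1.  Hence the optimum is at max (u1, E);
   every comparison reduces to the tangent-line inequality for the concave
   function ln. *)

From Stdlib Require Import Reals Lra Psatz ClassicalEpsilon.
Open Scope R_scope.

Lemma ln_le_tangent x y : 0 < x -> 0 < y -> ln y <= ln x + (y - x) / x.
Proof.
  intros hx hy.
  pose proof (exp_ineq1_le (ln (y / x))) as h.
  rewrite exp_ln in h by (apply Rdiv_lt_0_compat; lra).
  unfold Rdiv in h. rewrite ln_mult in h by (try apply Rinv_0_lt_compat; lra).
  rewrite ln_Rinv in h by lra.
  replace ((y - x) / x) with (y * / x - 1) by (field; lra). lra.
Qed.

Lemma ln_le_tangent_mul x y : 0 < x -> 0 < y -> x * ln y <= x * ln x + (y - x).
Proof.
  intros hx hy.
  pose proof (ln_le_tangent x y hx hy) as h.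
  apply (Rmult_le_compat_l x) in h; [|lra].
  replace (x * (ln x + (y - x) / x)) with (x * ln x + (y - x)) in h by (field; lra).
  exact h.
Qed.

Lemma ln_le_line_beyond x y u w :
  0 < u -> 1 <= x * u -> ln u <= x * u + y -> u <= w -> ln w <= x * w + y.
Proof.
  intros hu hxu hlnu huw.
  pose proof (ln_le_tangent_mul u w hu ltac:(lra)).
  nra.
Qed.

Lemma xlnx_sub_le x y : 1 <= x <= y -> x * ln x - x <= y * ln y - y.
Proof.
  intros hxy.
  pose proof (ln_le_tangent_mul y x ltac:(lra) ltac:(lra)).
  pose proof (ln_le_tangent_mul x 1 ltac:(lra) ltac:(lra)) as h1.
  rewrite ln_1 in h1.
  assert (0 <= ln x) by nra.
  nra.
Qed.

Lemma div_le_cross x y p q : 0 < p -> 0 < q -> x * q <= y * p -> x / p <= y / q.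
Proof.
  intros hp hq h.
  apply (Rmult_le_reg_r (p * q)); [nra|].
  replace (x / p * (p * q)) with (x * q) by (field; lra).
  replace (y / q * (p * q)) with (y * p) by (field; lra). lra.
Qed.

Lemma div_lt_cross x y p q : 0 < p -> 0 < q -> x * q < y * p -> x / p < y / q.
Proof.
  intros hp hq h.
  apply (Rmult_lt_reg_r (p * q)); [nra|].
  replace (x / p * (p * q)) with (x * q) by (field; lra).
  replace (y / q * (p * q)) with (y * p) by (field; lra). lra.
Qed.

Lemma exp_m1 : exp (-1) = / exp 1.
Proof. rewrite <- exp_Ropp; f_equal; ring. Qed.

Lemma W0_exists z : - exp (-1) <= z -> exists w, -1 <= w /\ w * exp w = z.
Proof.
  intros hz.
  set (Y := Rabs z + 1).
  assert (hY : 0 < Y) by (unfold Y; pose proof (Rabs_pos z); lra).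
  assert (hzY : z <= Y) by (unfold Y; pose proof (Rle_abs z); lra).
  assert (heY : 1 <= exp Y) by (pose proof (exp_ineq1_le Y); lra).
  destruct (IVT_cor (fun w => w * exp w - z) (-1) Y) as [w [hw1 hw2]].
  - reg.
  - lra.
  - assert (h1 : -1 * exp (-1) - z <= 0) by lra.
    assert (h2 : 0 <= Y * exp Y - z) by nra.
    nra.
  - exists w. split; lra.
Qed.

Lemma Wm1_exists z : - exp (-1) <= z < 0 -> exists w, w <= -1 /\ w * exp w = z.
Proof.
  intros [hz1 hz2].
  set (n := - z).
  assert (hn : 0 < n) by (unfold n; lra).
  (* y = 4/n + 1 makes y e^{-y} <= n, using e^y >= (1 + y/2)^2 *)
  set (y := 4 / n + 1).
  assert (hny : n * y = 4 + n) by (unfold y; field; lra).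
  assert (hy : 1 <= y)
    by (unfold y; assert (0 < 4 / n) by (apply Rdiv_lt_0_compat; lra); lra).
  set (s := exp y).
  assert (hs : (1 + y / 2) * (1 + y / 2) <= s).
  { unfold s. replace y with (y / 2 + y / 2) at 3 by field.
    rewrite exp_plus. pose proof (exp_ineq1_le (y / 2)). nra. }
  assert (hys : y <= n * s) by nra.
  assert (hspos : 0 < s) by (unfold s; apply exp_pos).
  destruct (IVT_cor (fun w => w * exp w - z) (- y) (-1)) as [w [hw1 hw2]].
  - reg.
  - lra.
  - assert (h1 : -1 * exp (-1) - z <= 0) by lra.
    assert (h2 : 0 <= - y * exp (- y) - z).
    { rewrite exp_Ropp. fold s.
      assert (y * / s <= n).
      { apply (Rmult_le_reg_r s); [lra|]. rewrite Rmult_assoc, Rinv_l; lra. }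
      unfold n in *. lra. }
    nra.
  - exists w. split; lra.
Qed.

Lemma LambertW0_spec z :
  - exp (-1) <= z -> -1 <= LambertW0 z /\ LambertW0 z * exp (LambertW0 z) = z.
Proof. intros hz. unfold LambertW0. apply epsilon_spec, W0_exists, hz. Qed.

Lemma LambertWm1_spec z :
  - exp (-1) <= z < 0 -> LambertWm1 z <= -1 /\ LambertWm1 z * exp (LambertWm1 z) = z.
Proof. intros hz. unfold LambertWm1. apply epsilon_spec, Wm1_exists, hz. Qed.

Lemma LambertW0_stationary K : 0 < K ->
  let E := exp (LambertW0 ((K - 1) / exp 1) + 1) in
  1 < E /\ E * (ln E - 1) = K - 1.
Proof.
  intros hK E.
  pose proof (exp_pos 1) as he.
  destruct (LambertW0_spec ((K - 1) / exp 1)) as [hv hvexp].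
  { rewrite exp_m1. unfold Rdiv.
    assert (0 < / exp 1) by (apply Rinv_0_lt_compat; lra). nra. }
  set (v := LambertW0 ((K - 1) / exp 1)) in *.
  assert (hlnE : ln E - 1 = v) by (unfold E; rewrite ln_exp; ring).
  assert (hEv : E * v = K - 1).
  { unfold E. rewrite exp_plus.
    replace (exp v * exp 1 * v) with (v * exp v * exp 1) by ring.
    rewrite hvexp. field. lra. }
  split; [|rewrite hlnE; exact hEv].
  assert (hv' : v <> -1).
  { intros h. rewrite h, exp_m1 in hvexp.
    apply (f_equal (Rmult (exp 1))) in hvexp.
    field_simplify in hvexp; lra. }
  unfold E. pose proof (exp_ineq1_le (v + 1)). lra.
Qed.

Lemma LambertWm1_crossing x b : 0 < x -> 0 < b ->
  exists u, LambertWm1 (- x * exp (- b - x)) = - x * u /\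
            1 < u /\ 1 <= x * u /\ ln u = x * (u - 1) - b.
Proof.
  intros hx hb.
  destruct (LambertWm1_spec (- x * exp (- b - x))) as [hW hWexp].
  { replace (exp (- b - x)) with (exp (- b) * (exp (- x)))
      by (rewrite <- exp_plus; f_equal; ring).
    assert (exp (- b) < 1) by (rewrite <- exp_0; apply exp_increasing; lra).
    assert (x * exp (- x) <= exp (-1)).
    { replace (exp (-1)) with (exp (x - 1) * exp (- x))
        by (rewrite <- exp_plus; f_equal; ring).
      pose proof (exp_ineq1_le (x - 1)). pose proof (exp_pos (- x)). nra. }
    pose proof (exp_pos (- b)). pose proof (exp_pos (- x)).
    assert (0 < x * exp (- x)) by (apply Rmult_lt_0_compat; lra).
    split; nra. }
  set (W := LambertWm1 (- x * exp (- b - x))) in *.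
  set (u := - W / x).
  assert (hWu : W = - x * u) by (unfold u; field; lra).
  clearbody u. rewrite hWu in hW, hWexp.
  exists u.
  assert (hxu : 1 <= x * u) by lra.
  assert (hu0 : 0 < u) by nra.
  assert (hln : ln u = x * (u - 1) - b).
  { assert (hue : u * exp (- x * u) = exp (- b - x)).
    { apply (Rmult_eq_reg_l (- x)); [|lra]. rewrite <- hWexp. ring. }
    replace u with (exp (- b - x + x * u)) at 1.
    - rewrite ln_exp. ring.
    - rewrite exp_plus, <- hue, Rmult_assoc, <- exp_plus.
      replace (- x * u + x * u) with 0 by ring. rewrite exp_0. ring. }
  split; [exact hWu|].
  split; [|split; assumption].
  destruct (Rlt_le_dec 1 u) as [h|h]; [exact h|exfalso].
  pose proof (ln_le_tangent_mul u 1 hu0 ltac:(lra)).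
  rewrite ln_1, hln in *. nra.
Qed.

Definition lam_of (K u : R) : R := (u - 1) / (u - 1 + K).

Definition relay_rate (C K u : R) : R := C * lam_of K u.

Definition dest_rate (b K u : R) : R := b + K * (ln u / (u - 1 + K)).

Lemma lam_of_le K u v : 0 < K -> 1 <= u <= v -> lam_of K u <= lam_of K v.
Proof. intros. unfold lam_of. apply div_le_cross; nra. Qed.

Lemma lam_of_in_unit K u : 0 < K -> 1 < u -> 0 < lam_of K u < 1.
Proof.
  intros hK hu. unfold lam_of. split.
  - apply Rdiv_lt_0_compat; lra.
  - apply (Rmult_lt_reg_r (u - 1 + K)); [lra|].
    unfold Rdiv. rewrite Rmult_assoc, Rinv_l; lra.
Qed.

Lemma lam_of_inv K l : 0 < K -> 0 < l < 1 -> lam_of K (1 + K * l / (1 - l)) = l.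
Proof. intros. unfold lam_of. field. split; nra. Qed.

Lemma Rmax_lam_of K u v : 0 < K -> 1 <= u -> 1 <= v ->
  Rmax (lam_of K u) (lam_of K v) = lam_of K (Rmax u v).
Proof.
  intros hK hu hv. destruct (Rle_or_lt u v).
  - rewrite !Rmax_right; auto using lam_of_le.
  - rewrite !Rmax_left; try apply lam_of_le; lra.
Qed.

Lemma ps_objective_lam_of C b K u : 0 < K -> 1 <= u ->
  ps_objective C b K (lam_of K u) = Rmin (relay_rate C K u) (dest_rate b K u).
Proof.
  intros hK hu. unfold ps_objective, relay_rate, dest_rate, lam_of.
  f_equal; [ring|].
  replace (1 + K * ((u - 1) / (u - 1 + K)) / (1 - (u - 1) / (u - 1 + K))) with u
    by (field; lra).
  field; lra.
Qed.

Lemma relay_minus_dest_rate C b K u : 0 < K -> 1 <= u ->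
  relay_rate C K u - dest_rate b K u
  = K * ((C - b) / K * (u - 1) - b - ln u) / (u - 1 + K).
Proof. intros. unfold relay_rate, dest_rate, lam_of. field. lra. Qed.

Section Stationary.

Variables K E : R.
Hypothesis hK : 0 < K.
Hypothesis hE : 1 < E.
Hypothesis hE_stationary : E * (ln E - 1) = K - 1.

Lemma ln_ratio_stationary : ln E / (E - 1 + K) = / E.
Proof.
  replace (E - 1 + K) with (E * ln E) by lra.
  assert (0 < ln E) by (rewrite <- ln_1; apply ln_increasing; lra).
  field. lra.
Qed.

Lemma ln_ratio_le_stationary w : 1 <= w -> ln w / (w - 1 + K) <= ln E / (E - 1 + K).
Proof.
  intros hw. rewrite ln_ratio_stationary.
  replace (/ E) with (1 / E) by (field; lra).
  apply div_le_cross; [lra|lra|].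
  pose proof (ln_le_tangent_mul E w ltac:(lra) ltac:(lra)). lra.
Qed.

Lemma ln_ratio_antitone s w :
  E <= s <= w -> ln w / (w - 1 + K) <= ln s / (s - 1 + K).
Proof.
  intros hsw.
  apply div_le_cross; [lra|lra|].
  assert (hs : s - 1 + K <= s * ln s)
    by (pose proof (xlnx_sub_le E s ltac:(lra)); lra).
  pose proof (ln_le_tangent_mul s w ltac:(lra) ltac:(lra)) as ht.
  assert (h1 : (s - 1 + K) * (s * ln w) <= (s - 1 + K) * (s * ln s + (w - s)))
    by (apply Rmult_le_compat_l; lra).
  assert (h2 : (s - 1 + K) * (w - s) <= s * ln s * (w - s))
    by (apply Rmult_le_compat_r; lra).
  apply (Rmult_le_reg_l s); [lra|]. nra.
Qed.

Lemma dest_rate_le_stationary b w : 1 <= w -> dest_rate b K w <= dest_rate b K E.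
Proof.
  intros hw. unfold dest_rate. apply Rplus_le_compat_l, Rmult_le_compat_l; [lra|].
  apply ln_ratio_le_stationary, hw.
Qed.

Lemma dest_rate_antitone b s w : E <= s <= w -> dest_rate b K w <= dest_rate b K s.
Proof.
  intros hsw. unfold dest_rate. apply Rplus_le_compat_l, Rmult_le_compat_l; [lra|].
  apply ln_ratio_antitone, hsw.
Qed.

End Stationary.

Lemma ps_objective_u_le_max C b K u1 E u :
  0 < K -> 0 <= C ->
  1 < u1 -> 1 <= (C - b) / K * u1 -> ln u1 = (C - b) / K * (u1 - 1) - b ->
  1 < E -> E * (ln E - 1) = K - 1 ->
  1 <= u ->
  Rmin (relay_rate C K u) (dest_rate b K u)
  <= Rmin (relay_rate C K (Rmax u1 E)) (dest_rate b K (Rmax u1 E)).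
Proof.
  intros hK hC hu1 hxu1 hln1 hE hEst hu.
  set (x := (C - b) / K) in *.
  assert (hbeyond : forall w, u1 <= w -> dest_rate b K w <= relay_rate C K w).
  { intros w hw.
    assert (hl : ln w <= x * w + (- x - b))
      by (apply (ln_le_line_beyond x (- x - b) u1 w); lra).
    pose proof (relay_minus_dest_rate C b K w hK ltac:(lra)) as hgap.
    fold x in hgap.
    assert (0 <= K * (x * (w - 1) - b - ln w) / (w - 1 + K))
      by (apply Rmult_le_pos; [nra|left; apply Rinv_0_lt_compat; lra]).
    lra. }
  assert (hcross : dest_rate b K u1 = relay_rate C K u1).
  { pose proof (relay_minus_dest_rate C b K u1 hK ltac:(lra)) as hgap.
    fold x in hgap. rewrite <- hln1 in hgap.
    replace (K * (ln u1 - ln u1) / (u1 - 1 + K)) with 0 in hgap by (field; lra).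
    lra. }
  assert (hrelay_le : forall w, 1 <= w <= u1 -> relay_rate C K w <= relay_rate C K u1)
    by (intros; apply Rmult_le_compat_l; [lra|apply lam_of_le; lra]).
  destruct (Rle_lt_dec u1 E) as [hu1E|hEu1].
  - rewrite Rmax_right, (Rmin_right (relay_rate C K E)) by (auto; apply hbeyond; lra).
    apply Rle_trans with (dest_rate b K u); [apply Rmin_r|].
    apply dest_rate_le_stationary; lra.
  - rewrite Rmax_left, (Rmin_left (relay_rate C K u1)) by lra.
    destruct (Rle_lt_dec u u1) as [huu1|hu1u].
    + apply Rle_trans with (relay_rate C K u); [apply Rmin_l|].
      apply hrelay_le; lra.
    + apply Rle_trans with (dest_rate b K u); [apply Rmin_r|].
      rewrite <- hcross. apply (dest_rate_antitone K E); lra.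
Qed.

Lemma ps_objective_maximizer (C b c' : R) : 0 < b -> b < C -> 0 < c' ->
  let a' := C - b in
  let Wm := LambertWm1 (- (a' / c') * exp (- b - a' / c')) in
  let lam1 := (- (1 / a') * Wm - 1 / c') / (1 - (1 / a') * Wm - 1 / c') in
  let E := exp (LambertW0 ((c' - 1) / exp 1) + 1) in
  let lam2 := (E - 1) / (E + c' - 1) in
  let lamstar := Rmax lam1 lam2 in
  0 < lamstar < 1 /\
  (forall lam, 0 < lam < 1 ->
     ps_objective C b c' lam <= ps_objective C b c' lamstar).
Proof.
  intros hb hbC hc a' Wm lam1 E lam2 lamstar.
  assert (hx : 0 < a' / c') by (apply Rdiv_lt_0_compat; unfold a'; lra).
  destruct (LambertWm1_crossing (a' / c') b hx hb) as [u1 [hWm [hu1 [hxu1 hln1]]]].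
  destruct (LambertW0_stationary c' hc) as [hE hEst]. fold E in hE, hEst.
  assert (hlam1 : lam1 = lam_of c' u1).
  { unfold lam1, Wm, lam_of. rewrite hWm. field. repeat split; unfold a'; nra. }
  assert (hlam2 : lam2 = lam_of c' E) by (unfold lam2, lam_of; f_equal; ring).
  assert (hstar : lamstar = lam_of c' (Rmax u1 E)).
  { unfold lamstar. rewrite hlam1, hlam2. apply Rmax_lam_of; lra. }
  assert (hmax : 1 < Rmax u1 E) by (apply Rlt_le_trans with u1; [lra|apply Rmax_l]).
  rewrite hstar. split; [apply lam_of_in_unit; assumption|].
  intros l hl.
  set (u := 1 + c' * l / (1 - l)).
  assert (hu : 1 < u)
    by (unfold u; assert (0 < c' * l / (1 - l)) by (apply Rdiv_lt_0_compat; nra); lra).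
  rewrite <- (lam_of_inv c' l hc hl). fold u.
  rewrite !ps_objective_lam_of by lra.
  apply ps_objective_u_le_max; unfold a' in *; lra.
Qed.

Lemma ps_sd_snr_lt_sr_snr PS HSR HSD sa2 sb2 rho :
  0 < PS -> 0 < HSD -> 0 < sa2 -> 0 < sb2 -> HSR > HSD ->
  0 < rho < 1 - HSD * sb2 / (HSR * (sa2 + sb2) - HSD * sa2) ->
  PS * HSD / (sa2 + sb2) < (1 - rho) * PS * HSR / ((1 - rho) * sa2 + sb2).
Proof.
  intros hPS hHSD hsa hsb hH hrho.
  assert (hD : 0 < HSR * (sa2 + sb2) - HSD * sa2) by nra.
  set (D := HSR * (sa2 + sb2) - HSD * sa2) in *.
  assert (hq : HSD * sb2 / D * D = HSD * sb2) by (field; lra).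
  assert (0 < HSD * sb2 / D) by (apply Rdiv_lt_0_compat; nra).
  assert (hkey : HSD * sb2 < (1 - rho) * D) by nra.
  assert (PS * (HSD * sb2) < PS * ((1 - rho) * D)) by (apply Rmult_lt_compat_l; lra).
  apply div_lt_cross; [lra|nra|]. unfold D in *. lra.
Qed.

Theorem corollary1
  (PS HSR HSD HRD sa2 sb2 sD2 eta rho : R)
  (hPS : 0 < PS) (hHSR : 0 < HSR) (hHSD : 0 < HSD) (hHRD : 0 < HRD)
  (hsa : 0 < sa2) (hsb : 0 < sb2)
  (heta : 0 < eta <= 1)
  (hsD : sD2 = sa2 + sb2)
  (hH : HSR > HSD)
  (hrho : 0 < rho < 1 - HSD * sb2 / (HSR * sD2 - HSD * sa2)) :
  let CSR := ln (1 + (1 - rho) * PS * HSR / ((1 - rho) * sa2 + sb2)) in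
  let b := ln (1 + PS * HSD / sD2) in
  let a' := CSR - b in
  let c' := eta * rho * HSR * HRD * PS / sD2 in
  let Wm := LambertWm1 (- (a' / c') * exp (- b - a' / c')) in
  let lam1 := (- (1 / a') * Wm - 1 / c') / (1 - (1 / a') * Wm - 1 / c') in
  let E := exp (LambertW0 ((c' - 1) / exp 1) + 1) in
  let lam2 := (E - 1) / (E + c' - 1) in
  let lamstar := Rmax lam1 lam2 in
  0 < lamstar < 1 /\
  (forall lam, 0 < lam < 1 ->
     ps_objective CSR b c' lam <= ps_objective CSR b c' lamstar).
Proof.
  subst sD2. intros CSR b a' c'.
  assert (hsnr : 0 < PS * HSD / (sa2 + sb2)) by (apply Rdiv_lt_0_compat; nra).
  apply ps_objective_maximizer.
  - unfold b. rewrite <- ln_1. apply ln_increasing; lra.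
  - apply ln_increasing; [lra|].
    apply Rplus_lt_compat_l, ps_sd_snr_lt_sr_snr; assumption.
  - apply Rdiv_lt_0_compat; [repeat apply Rmult_lt_0_compat|]; lra.
Qed.
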